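(* Let $(Y,d)$ be a metric space and let $k:Y\times Y\to[0,+\infty)$ be a positive, symmetric, bounded kernel such that the family $\{k(\cdot,y): y\in Y\}$ is uniformly equicontinuous on $(Y,d)$. Then $A(Y)=R(Y)\neq\emptyset$.
   Context: For a regular Borel probability measure $\mu$ on $Y$ (metric topology) the potential is $U^\mu(x)=\int_Y k(x,y)\,d\mu(y)$, and $A(\mu,Y):=\overline{\mathrm{conv}}\{U^\mu(x):x\in Y\}=[\inf_Y U^\mu,\sup_Y U^\mu]$. Let $\mathfrak{M}_1(Y)$ be the set of regular Borel probability measures on $Y$ and $\mathfrak{M}_1^{\#}(Y)$ those with finite support. The average set is $A(Y):=\bigcap_{\mu\in\mathfrak{M}_1(Y)}A(\mu,Y)$ and the rendezvous set is $R(Y):=\bigcap_{n\in\mathbb{N}}\bigcap_{w_1,\dots,w_n\in Y}A(\frac1n\sum_{j=1}^n\delta_{w_j},Y)$, which equals $\bigcap_{\mu\in\mathfrak{M}_1^{\#}(Y)}A(\mu,Y)$. *)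

From HB Require Import structures.
From mathcomp Require Import all_boot all_order all_algebra.
From mathcomp Require Import all_classical all_reals all_analysis.
Set Implicit Arguments. Unset Strict Implicit. Unset Printing Implicit Defensive.
Import Order.TTheory GRing.Theory Num.Theory.
Local Open Scope classical_set_scope.
Local Open Scope ring_scope.

Section Defs.
Variables (R : realType) (Y : pointedType) (d : Y -> Y -> R).

Definition is_metric : Prop :=
  [/\ forall x y, 0 <= d x y,
      forall x y, d x y = 0 <-> x = y,
      forall x y, d x y = d y x &
      forall x y z, d x z <= d x y + d y z].

Definition dopen (U : set Y) : Prop :=
  forall x, U x -> exists2 e : R, 0 < e & forall y, d x y < e -> U y.

Definition dcompact (K : set Y) : Prop :=
  forall (I : Type) (F : I -> set Y), (forall i, dopen (F i)) ->
    K `<=` \bigcup_i F i ->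
    exists J : set I, finite_set J /\ K `<=` \bigcup_(i in J) F i.

Definition borelY := g_sigma_algebraType dopen.

Definition regular (mu : probability borelY R) : Prop :=
  forall B : set borelY, measurable B ->
    mu B = ereal_sup [set mu K | K in [set K : set borelY | dcompact K /\ K `<=` B]]
    /\ mu B = ereal_inf [set mu G | G in [set G : set borelY | dopen G /\ B `<=` G]].

Variable k : Y -> Y -> R.

Definition potential (mu : probability borelY R) (x : Y) : R :=
  fine (\int[mu]_(y in setT) (k x y)%:E)%E.

(* closed convex hull of the range of a (bounded) real function on Y *)
Definition hull (U : Y -> R) : set R :=
  [set r | inf (range U) <= r <= sup (range U)].

Definition Ameas (mu : probability borelY R) : set R := hull (potential mu).

Definition average_set : set R :=
  [set r | forall mu : probability borelY R, regular mu -> Ameas mu r].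

(* potential of the discrete measure (1/n) sum_j delta_{w_j} *)
Definition disc_potential (n : nat) (w : 'I_n -> Y) (x : Y) : R :=
  n%:R^-1 * \sum_(j < n) k x (w j).

Definition rendezvous_set : set R :=
  [set r | forall (n : nat) (w : 'I_n -> Y), (0 < n)%N -> hull (disc_potential w) r].

End Defs.

From HB Require Import structures.
From mathcomp Require Import all_boot all_order all_algebra.
From mathcomp Require Import all_classical all_reals all_analysis.
From mathcomp Require Import ring lra measurable_realfun.
Import Order.TTheory GRing.Theory Num.Theory.
Local Open Scope classical_set_scope.
Local Open Scope ring_scope.
Set Implicit Arguments. Unset Strict Implicit. Unset Printing Implicit Defensive.

(* Uniform discrete measures are regular and their potentials are the discrete
   potentials, so A(Y) is contained in R(Y).  Conversely, equicontinuity makes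
   the potential of a regular probability mu uniformly approximable by discrete
   potentials: take a compact K of mass > 1 - eps, cover it by finitely many
   delta-balls, replace mu on each piece by a point mass at its centre, and round
   the weights down to multiples of 1/N.  Hence R(Y) is contained in A(Y).
   Finally R(Y) is nonempty: symmetry of k gives the mutual-energy identity
   int U_w d nu_v = int U_v d nu_w for uniform discrete measures, whence
   inf U_w <= sup U_v, so sup_w inf U_w lies in every hull. *)

Section Means.
Variable R : numFieldType.

Lemma mean_ge n (f : 'I_n -> R) c : (0 < n)%N -> (forall j, c <= f j) ->
  c <= n%:R^-1 * \sum_(j < n) f j.
Proof.
move=> n0 cf; have nR : 0 < n%:R :> R by rewrite ltr0n.
rewrite -(ler_pM2l nR) mulrA mulfV ?gt_eqF // mul1r mulr_natl.
by rewrite -[n in c *+ n]card_ord -sumr_const; apply: ler_sum.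
Qed.

Lemma mean_le n (f : 'I_n -> R) c : (0 < n)%N -> (forall j, f j <= c) ->
  n%:R^-1 * \sum_(j < n) f j <= c.
Proof.
move=> n0 fc; have nR : 0 < n%:R :> R by rewrite ltr0n.
rewrite -(ler_pM2l nR) mulrA mulfV ?gt_eqF // mul1r mulr_natl.
by rewrite -[n in c *+ n]card_ord -sumr_const; apply: ler_sum.
Qed.

End Means.

Section RealBounds.
Variable R : realType.

Lemma range_bounded (T : Type) (f : T -> R) a b : (forall x, a <= f x <= b) ->
  has_lbound (range f) /\ has_ubound (range f).
Proof. by move=> fab; split; [exists a|exists b] => _ [x _ <-]; case/andP: (fab x). Qed.

Lemma hull_uniform_limit (T : pointedType) (f : T -> R) r :
  has_lbound (range f) -> has_ubound (range f) ->
  (forall e, 0 < e ->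
     exists2 g : T -> R, hull g r & forall x, `|f x - g x| <= e) ->
  hull f r.
Proof.
move=> lf uf approx; apply/andP; split; apply/ler_addgt0Pr => e e0;
  have [g /andP[gl gu] fg] := approx e e0.
- rewrite -lerBlDr; apply: le_trans gl.
  apply: lb_le_inf; first by exists (g point), point.
  move=> _ [x _ <-]; have := ge_inf lf (imageT f x); have := fg x.
  by rewrite ler_norml => /andP[? ?] ?; lra.
- apply: le_trans gu _; apply: ge_sup; first by exists (g point), point.
  move=> _ [x _ <-]; have := ub_le_sup uf (imageT f x); have := fg x.
  by rewrite ler_norml => /andP[? ?] ?; lra.
Qed.

End RealBounds.

Lemma sum_truncn_bounds (T : eqType) (R : archiFieldType) (s : seq (T * R)) (c : R) :
  0 <= c -> (forall z, z \in s -> 0 <= z.2) ->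
  c * \sum_(z <- s) z.2 - (size s)%:R <= (\sum_(z <- s) Num.truncn (c * z.2))%:R
    <= c * \sum_(z <- s) z.2.
Proof.
move=> c0 s0; rewrite natr_sum mulr_sumr -[size s]count_predT -sum1_count natr_sum.
rewrite -sumrB; apply/andP; split; rewrite big_seq [leRHS]big_seq; apply: ler_sum;
  move=> z zs; have /andP[lo hi] := truncn_itv (mulr_ge0 c0 (s0 z zs)).
- by rewrite lerBlDr natr1 ltW.
- exact: lo.
Qed.

Section Replicate.
Variables (T A : Type) (V : nmodType) (q : T * A -> nat).

Definition replicate (s : seq (T * A)) : seq T := flatten [seq nseq (q z) z.1 | z <- s].

Lemma size_replicate s : size (replicate s) = (\sum_(z <- s) q z)%N.
Proof.
rewrite size_flatten /shape -map_comp sumnE big_map.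
by apply: eq_bigr => z _; rewrite /= size_nseq.
Qed.

Lemma sum_replicate s (f : T -> V) :
  \sum_(y <- replicate s) f y = \sum_(z <- s) f z.1 *+ q z.
Proof.
rewrite big_flatten big_map; apply: eq_bigr => z _.
by rewrite big_nseq iter_addr_0.
Qed.

End Replicate.

Section MetricTopology.
Variables (R : realType) (Y : pointedType) (d : Y -> Y -> R).

Definition dcontinuous (f : Y -> R) : Prop :=
  forall y e, 0 < e -> exists2 del : R, 0 < del &
    forall y', d y y' < del -> `|f y - f y'| < e.

Lemma dopen_gt (f : Y -> R) r : dcontinuous f -> dopen d [set y | r < f y].
Proof.
move=> fc y /= ry; have [del del0 fdel] : exists2 del : R, 0 < del &
    forall y', d y y' < del -> `|f y - f y'| < f y - r.
  by apply: fc; rewrite subr_gt0.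
exists del => // y' /fdel; rewrite /= ltr_norml => /andP[_]; lra.
Qed.

Lemma dcompact_finite (K : set Y) : finite_set K -> dcompact d K.
Proof.
case/finite_seqP => s -> I F _; elim: s => [_|c s IH cov].
  by exists set0; split => // y.
have [i _ Fci] := cov c (mem_head c s).
have [|J [fJ sJ]] := IH; first by move=> y ys; apply: cov; rewrite /= inE ys orbT.
exists (i |` J); split; first by rewrite finite_setU; split => //; exact: finite_set1.
move=> y /=; rewrite inE => /orP[/eqP -> | ys]; first by exists i => //; left.
by have [j Jj Fj] := sJ y ys; exists j => //; right.
Qed.

Lemma dcontinuous_measurable (f : Y -> R) :
  dcontinuous f -> measurable_fun [set: borelY d] (EFin \o f).
Proof.
move=> fc; apply/measurable_EFinP.
apply: (measurability _ (RGenOInfty.measurableE R)) => //.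
move=> /= _ [_ [r ->] <-]; apply: measurableI => //; apply: sub_sigma_algebra.
rewrite (_ : _ @^-1` _ = [set y | r < f y]); first exact: dopen_gt.
by apply/seteqP; split => y /=; rewrite in_itv /= andbT.
Qed.

Hypothesis hd : is_metric d.

Lemma dcontinuous_dist c : dcontinuous (d c).
Proof.
case: hd => _ _ dsym dtri y e e0; exists e => // y' dyy'.
have := dtri c y y'; have := dtri c y' y; rewrite (dsym y' y) ltr_norml.
move=> h1 h2; apply/andP; split; lra.
Qed.

Lemma dopen_ball c r : dopen d [set y | d c y < r].
Proof.
case: hd => _ _ _ dtri y /= cy; exists (r - d c y); first by rewrite subr_gt0.
by move=> y' yy'; have := dtri c y y'; lra.
Qed.

Lemma dcompact_closed K : dcompact d K -> dopen d (~` K).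
Proof.
case: hd => d0 deq _ _ cK x Kx'.
pose F n := [set y | n.+1%:R^-1 < d x y].
have cov : K `<=` \bigcup_n F n.
  move=> y Ky; have dxy : 0 < d x y.
    by rewrite lt_neqAle d0 andbT; apply/eqP => /esym/deq xy; apply: Kx'; rewrite xy.
  exists (Num.truncn (d x y)^-1) => //; rewrite /F /= invf_plt ?posrE //.
  exact: truncnS_gt.
have [J [/finite_seqP[s ->] KJ]] :=
  cK nat F (fun n => dopen_gt (dcontinuous_dist x)) cov.
pose N := (\max_(j <- s) j)%N.
exists N.+1%:R^-1 => // y dxy Ky; have [j /= js Fj] := KJ y Ky.
have jN : (j <= N)%N by apply: (leq_bigmax_seq (F := id)).
have : N.+1%:R^-1 <= j.+1%:R^-1 :> R by rewrite lef_pV2 ?posrE // ler_nat.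
by move/(lt_le_trans dxy)/(lt_trans Fj); rewrite ltxx.
Qed.

Lemma dcompact_measurable (K : set (borelY d)) : dcompact d K -> measurable K.
Proof.
move=> cK; rewrite -[K]setCK; apply: measurableC; apply: sub_sigma_algebra.
exact: dcompact_closed.
Qed.

End MetricTopology.

Section UniformDiscrete.
Variables (R : realType) (Y : pointedType) (d : Y -> Y -> R).
Local Notation T := (borelY d).
Variables (n : nat) (w : 'I_n -> Y).

(* [msum] sums over the first [n] naturals, so [w] is padded to [nat]. *)
Definition wnat (i : nat) : T :=
  if insub i is Some j then w j else point.

Definition dirac_sum := msum (fun i => @dirac _ T (wnat i) R) n.

Definition udisc := mnormalize dirac_sum (@dirac _ T point R).

Hypothesis n0 : (0 < n)%N.

Lemma dirac_sumE (A : set T) : dirac_sum A = (\sum_(j < n) (w j \in A)%:R)%:E.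
Proof.
rewrite /dirac_sum /msum -sumEFin; apply: eq_bigr => j _.
by rewrite /= diracE /wnat valK.
Qed.

Lemma udiscE (A : set T) : udisc A = (n%:R^-1 * \sum_(j < n) (w j \in A)%:R)%:E.
Proof.
rewrite /udisc /mnormalize /= -[msum _ n]/dirac_sum !dirac_sumE.
have -> : \sum_(j < n) (w j \in [set: T])%:R = n%:R :> R.
  by under eq_bigr do rewrite in_setT; rewrite sumr_const card_ord.
by rewrite eqe pnatr_eq0 gtn_eqF //= dirac_sumE -EFinM mulrC.
Qed.

Lemma le_udisc (A B : set T) : (forall j, A (w j) -> B (w j)) -> (udisc A <= udisc B)%E.
Proof.
move=> AB; rewrite !udiscE lee_fin ler_wpM2l ?invr_ge0 ?ler0n //.
apply: ler_sum => j _; have [/set_mem/AB/mem_set ->|] := boolP (w j \in A).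
  exact: lexx.
by rewrite ler0n.
Qed.

Lemma udisc_potential (k : Y -> Y -> R) x : (forall y, 0 <= k x y) ->
  measurable_fun [set: T] (EFin \o k x) -> potential k udisc x = disc_potential k w x.
Proof.
move=> k0 mk; rewrite /potential /disc_potential.
have c0 : 0 <= n%:R^-1 :> R by rewrite invr_ge0 ler0n.
rewrite (eq_measure_integral (mscale (NngNum c0) dirac_sum)); last first.
  move=> A _ _; apply: (eq_trans (udiscE A)).
  by transitivity ((n%:R^-1)%:E * dirac_sum A)%E; rewrite // dirac_sumE -EFinM.
rewrite ge0_integral_mscale //; last by move=> y _; rewrite lee_fin.
rewrite ge0_integral_measure_sum //; last by move=> y _; rewrite lee_fin.
under eq_bigr do rewrite integral_dirac // diracE in_setT mul1e /wnat valK.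
by rewrite sumEFin -EFinM.
Qed.

Lemma udisc_regular : is_metric d -> regular udisc.
Proof.
move=> hd B mB; have finw : finite_set (range w).
  exact: finite_image finite_finset.
split; apply/le_anti/andP; split.
- apply: (@le_trans _ _ (udisc (B `&` range w))).
    by apply: le_udisc => j Bj; split => //; exists j.
  apply: ereal_sup_ubound; exists (B `&` range w) => //; split; last exact: subIsetl.
  exact/dcompact_finite/(sub_finite_set (@subIsetr _ B _)).
- by apply: ge_ereal_sup => _ [K [_ KB] <-]; apply: le_udisc => j /KB.
- by apply: le_ereal_inf_tmp => _ [G [_ BG] <-]; apply: le_udisc => j /BG.
- apply: (@le_trans _ _ (udisc (~` (range w `\` B)))).
    apply: ereal_inf_lbound; exists (~` (range w `\` B)) => //.
    split; last by move=> y By [].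
    exact/dcompact_closed/dcompact_finite/(sub_finite_set (@subDsetl _ _ B)).
  by apply: le_udisc => j nB; apply: contrapT => Bj; apply: nB; split => //; exists j.
Qed.

End UniformDiscrete.

Section FiniteMeasure.
Context dT (T : measurableType dT) (R : realType).
Variable mu : {finite_measure set T -> \bar R}.

Lemma fine_measureU (A B : set T) : measurable A -> measurable B ->
  A `&` B = set0 -> fine (mu (A `|` B)) = fine (mu A) + fine (mu B).
Proof. by move=> mA mB AB; rewrite measureU // fineD // fin_num_measure. Qed.

Lemma Rintegral_bounds (D : set T) (f : T -> R) a b : measurable D ->
  mu.-integrable D (EFin \o f) -> (forall y, D y -> a <= f y <= b) ->
  a * fine (mu D) <= \int[mu]_(y in D) f y <= b * fine (mu D).
Proof.
move=> mD intf fab; rewrite -!Rintegral_cst //.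
by apply/andP; split; apply: le_Rintegral => //;
  try exact: finite_measure_integrable_cst; move=> y /fab /andP[].
Qed.

End FiniteMeasure.

Section Kernel.
Variables (R : realType) (Y : pointedType) (d k : Y -> Y -> R) (M : R).
Hypotheses (hd : is_metric d) (k0 : forall x y, 0 <= k x y)
  (ksym : forall x y, k x y = k y x) (kM : forall x y, k x y <= M)
  (keq : forall e : R, 0 < e -> exists2 delta : R, 0 < delta &
     forall x x' y, d x x' < delta -> `|k x y - k x' y| < e).
Local Notation T := (borelY d).

Lemma kernel_bound_ge0 : 0 <= M.
Proof. exact: le_trans (k0 point point) (kM point point). Qed.

Lemma kernel_near e : 0 < e -> exists2 del : R, 0 < del &
  forall x c y, d c y < del -> `|k x y - k x c| <= e.
Proof.
move=> e0; have [del del0 hdel] := keq e0; exists del => // x c y /(hdel _ _ x).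
by rewrite (ksym c) (ksym y) distrC => /ltW.
Qed.

Lemma kernel_dcontinuous x : dcontinuous d (k x).
Proof.
move=> y e e0; have [del del0 hdel] := keq e0; exists del => // y' /(hdel _ _ x).
by rewrite (ksym y) (ksym y').
Qed.

Lemma kernel_integrable (mu : probability T R) x (D : set T) : measurable D ->
  mu.-integrable D (EFin \o k x).
Proof.
move=> mD; apply: measurable_bounded_integrable => //.
- exact: le_lt_trans (probability_le1 mu mD) (ltry 1).
- apply/measurable_EFinP/measurable_funTS.
  exact: dcontinuous_measurable (kernel_dcontinuous x).
- rewrite /bounded_near; near=> M' => y _ /=.
  by rewrite ger0_norm // (le_trans (kM x y)).
Unshelve. all: by end_near.
Qed.

Lemma potential_bounds (mu : probability T R) x : 0 <= potential k mu x <= M.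
Proof.
have := Rintegral_bounds measurableT (kernel_integrable mu x measurableT)
  (fun y _ => introT andP (conj (k0 x y) (kM x y))).
have -> : fine (mu [set: T]) = 1 by rewrite probability_setT.
by rewrite !mulr1.
Qed.

Lemma disc_potential_bounds n (w : 'I_n -> Y) x : (0 < n)%N ->
  0 <= disc_potential k w x <= M.
Proof.
by move=> n0; apply/andP; split; [apply: mean_ge|apply: mean_le].
Qed.

Lemma disc_potential_nth (ws : seq Y) x :
  disc_potential k (fun j : 'I_(size ws) => nth point ws j) x =
  (size ws)%:R^-1 * \sum_(y <- ws) k x y.
Proof.
by rewrite /disc_potential -(big_mkord xpredT (fun j => k x (nth point ws j)))
  -(big_nth point xpredT (k x)).
Qed.

Lemma round_weights (s : seq (Y * R)) N : (0 < N)%N ->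
  (forall z, z \in s -> 0 <= z.2) -> \sum_(z <- s) z.2 <= 1 ->
  exists ws : seq Y, size ws = N /\ forall x,
    `|\sum_(z <- s) z.2 * k x z.1 - N%:R^-1 * \sum_(y <- ws) k x y|
      <= M * (1 - \sum_(z <- s) z.2) + M * (size s)%:R / N%:R.
Proof.
move=> N0 s0 s1; set P := \sum_(z <- s) z.2 in s1 *.
have NR : 0 < N%:R :> R by rewrite ltr0n.
pose q (z : Y * R) := Num.truncn (N%:R * z.2).
have qz z : z \in s -> (q z)%:R <= N%:R * z.2 < (q z)%:R + 1.
  by move=> zs; rewrite natr1 truncn_itv // mulr_ge0 ?ler0n ?s0.
pose Q := (\sum_(z <- s) q z)%N.
have /andP[QlP QuP] : N%:R * P - (size s)%:R <= Q%:R <= N%:R * P :=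
  sum_truncn_bounds (ltW NR) s0.
have QN : (Q <= N)%N.
  by rewrite -(ler_nat R); apply: le_trans QuP _; rewrite ler_piMr // ltW.
pose ws := replicate q s ++ nseq (N - Q) point.
exists ws; split; first by rewrite size_cat size_nseq size_replicate subnKC.
move=> x.
have -> : \sum_(y <- ws) k x y =
    \sum_(z <- s) k x z.1 *+ q z + (N - Q)%:R * k x point.
  by rewrite big_cat sum_replicate big_nseq iter_addr_0 mulr_natl.
set E := N%:R * \sum_(z <- s) z.2 * k x z.1 - \sum_(z <- s) k x z.1 *+ q z.
have [E0 EM] : 0 <= E /\ E <= M * (size s)%:R.
  rewrite /E mulr_sumr -sumrB -[size s]count_predT -sum1_count natr_sum mulr_sumr.
  split; rewrite big_seq; [apply: sumr_ge0|rewrite [leRHS]big_seq; apply: ler_sum];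
    move=> z /qz /andP[q1 q2]; rewrite -mulr_natl;
    have := k0 x z.1; have := kM x z.1; nra.
have NQ : (N - Q)%:R <= N%:R * (1 - P) + (size s)%:R :> R.
  by rewrite natrB // mulrBr mulr1; lra.
have kp := k0 x point; have kpM := kM x point.
have -> : M * (1 - P) + M * (size s)%:R / N%:R =
    N%:R^-1 * (M * (N%:R * (1 - P) + (size s)%:R)) by field; lra.
rewrite -[X in `|X - _|](mulKf (lt0r_neq0 NR)) -mulrBr normrM gtr0_norm ?invr_gt0 //.
rewrite ler_pM2l ?invr_gt0 // opprD addrA -/E ler_norml.
have : (N - Q)%:R * k x point <= (N%:R * (1 - P) + (size s)%:R) * M.
  by apply: ler_pM; rewrite ?ler0n.
have : 0 <= (N - Q)%:R * k x point by rewrite mulr_ge0 ?ler0n.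
have : 0 <= M * (N%:R * (1 - P)).
  by rewrite mulr_ge0 ?kernel_bound_ge0 // mulr_ge0 ?ler0n // subr_ge0.
move=> *; apply/andP; split; lra.
Qed.

Lemma Rintegral_near_center (mu : probability T R) (D : set T) x c e del :
  measurable D -> D `<=` [set y | d c y < del] ->
  (forall y, d c y < del -> `|k x y - k x c| <= e) ->
  `|\int[mu]_(y in D) k x y - fine (mu D) * k x c| <= e * fine (mu D).
Proof.
move=> mD Dball near.
have kD y : D y -> k x c - e <= k x y <= k x c + e.
  by move=> /Dball/near; rewrite ler_norml => /andP[? ?]; apply/andP; split; lra.
have /andP[lo hi] := Rintegral_bounds mD (kernel_integrable mu x mD) kD.
have := fine_ge0 (measure_ge0 mu D).
by rewrite ler_norml => ?; apply/andP; split; lra.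
Qed.

Lemma Rintegral_net_approx (mu : probability T R) e del (cs : seq Y) (D : set T) :
  (forall x c y, d c y < del -> `|k x y - k x c| <= e) ->
  measurable D -> D `<=` [set y | exists2 c, c \in cs & d c y < del] ->
  exists s : seq (Y * R), [/\ forall z, z \in s -> 0 <= z.2,
    \sum_(z <- s) z.2 = fine (mu D) &
    forall x, `|\int[mu]_(y in D) k x y - \sum_(z <- s) z.2 * k x z.1|
                <= e * fine (mu D)].
Proof.
move=> near; elim: cs D => [|c cs IH] D mD Dnet.
  have -> : D = set0 by apply/seteqP; split => // y /Dnet [].
  exists [::]; split => //; first by rewrite big_nil measure0.
  by move=> x; rewrite big_nil Rintegral_set0 measure0 subr0 normr0 mulr0.
pose B : set T := [set y | d c y < del].
have mB : measurable B by apply: sub_sigma_algebra; exact: dopen_ball.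
have mDB := measurableI _ _ mD mB; have mDB' := measurableD mD mB.
have [|s [s0 smass sapprox]] := IH (D `\` B) mDB'.
  by move=> y [/Dnet [c']]; rewrite inE => /predU1P [-> //|c'cs dc' _]; exists c'.
have DE : D = (D `&` B) `|` (D `\` B) by rewrite setUIDK.
have disj : (D `&` B) `&` (D `\` B) = set0.
  by apply/seteqP; split => // y [[_ ?] [_ ?]].
have massD : fine (mu D) = fine (mu (D `&` B)) + fine (mu (D `\` B)).
  by rewrite -fine_measureU // -DE.
exists ((c, fine (mu (D `&` B))) :: s); split.
- by move=> z; rewrite inE => /predU1P [-> | /s0 //]; exact: fine_ge0 (measure_ge0 _ _).
- by rewrite big_cons smass massD.
move=> x; have intD : \int[mu]_(y in D) k x y =
    \int[mu]_(y in D `&` B) k x y + \int[mu]_(y in D `\` B) k x y.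
  rewrite -Rintegral_setU -?DE //; first exact: kernel_integrable.
  by rewrite disj_set2E disj.
have := Rintegral_near_center mu mDB (@subIsetr _ D B) (near x c).
have := sapprox x.
rewrite big_cons intD massD /= !ler_norml => /andP[? ?] /andP[? ?].
by apply/andP; split; lra.
Qed.

Lemma regular_compact_net (mu : probability T R) e del :
  regular mu -> 0 < e -> 0 < del ->
  exists K : set T, exists cs : seq Y, [/\ measurable K, 1 - e < fine (mu K) &
    K `<=` [set y | exists2 c, c \in cs & d c y < del]].
Proof.
case: (hd) => _ deq _ _ reg e0 del0; have [inner _] := reg setT measurableT.
have : ((1 - e)%:E < mu setT)%E by rewrite probability_setT lte_fin; lra.
rewrite inner => /ereal_sup_gt [_ [K [cK _] <-] eK].
have cover : K `<=` \bigcup_(c in setT) [set y | d c y < del].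
  by move=> y _; exists y => //=; rewrite (deq y y).2.
have [J [/finite_seqP [cs ->] KJ]] :=
  cK Y _ (fun c => dopen_ball hd (c := c) (r := del)) cover.
have mK := dcompact_measurable hd cK.
exists K, cs; split => //.
by rewrite -lte_fin fineK ?fin_num_measure.
Qed.

Lemma potential_uniform_approx (mu : probability T R) e : regular mu -> 0 < e ->
  exists n (w : 'I_n -> Y), (0 < n)%N /\
    forall x, `|potential k mu x - disc_potential k w x| <= e.
Proof.
move=> reg e0; have M0 := kernel_bound_ge0.
(* errors: [eps] on [K], [M * eps] off [K], [2 * M * eps] from rounding *)
pose eps := e / (1 + 3 * M).
have eps0 : 0 < eps by rewrite divr_gt0 //; lra.
have epsE : eps * (1 + 3 * M) = e by rewrite mulfVK //; lra.
have [del del0 near] := kernel_near eps0.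
have [K [cs [mK muK Knet]]] := regular_compact_net reg eps0 del0.
have [s [s0 smass sapprox]] := Rintegral_net_approx mu near mK Knet.
have [N N0 Nsize] : exists2 N : nat, (0 < N)%N & (size s)%:R <= eps * N%:R.
  exists (Num.truncn ((size s)%:R / eps)).+1 => //.
  by rewrite mulrC -ler_pdivrMr // ltW // truncnS_gt.
have muK1 : fine (mu K) <= 1.
  by rewrite -lee_fin fineK ?fin_num_measure ?probability_le1.
have s1 : \sum_(z <- s) z.2 <= 1 by rewrite smass.
have [ws [wsN wsapprox]] := round_weights N0 s0 s1.
exists (size ws), (fun j => nth point ws j); split; first by rewrite wsN.
move=> x; rewrite disc_potential_nth wsN.
have mKc := measurableC mK.
have splitK : potential k mu x = \int[mu]_(y in K) k x y + \int[mu]_(y in ~` K) k x y.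
  rewrite -Rintegral_setU ?setUCr //; first exact: kernel_integrable.
  by rewrite disj_set2E setICr.
have massK : fine (mu K) + fine (mu (~` K)) = 1.
  rewrite -fine_measureU ?setICr // setUCr.
  by have -> : fine (mu [set: T]) = 1 by rewrite probability_setT.
have /andP[outK0 outKM] := Rintegral_bounds (a := 0) (b := M) mKc
  (kernel_integrable mu x mKc) (fun y _ => introT andP (conj (k0 x y) (kM x y))).
have := sapprox x; have := wsapprox x; rewrite smass splitK.
have : M * (size s)%:R / N%:R <= M * eps.
  by rewrite -mulrA ler_wpM2l // ler_pdivrMr ?ltr0n.
have : M * (1 - fine (mu K)) <= M * eps by rewrite ler_wpM2l //; lra.
have : eps * fine (mu K) <= eps by rewrite ger_pMr // ltW.
rewrite !ler_norml => ? ? ? /andP[? ?] /andP[? ?]; apply/andP; split; nra.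
Qed.

Lemma disc_potential_mutual n (w : 'I_n -> Y) m (v : 'I_m -> Y) :
  m%:R^-1 * \sum_(j < m) disc_potential k w (v j) =
  n%:R^-1 * \sum_(i < n) disc_potential k v (w i).
Proof.
rewrite /disc_potential !mulr_sumr.
under eq_bigr do rewrite mulrA mulr_sumr.
under [RHS]eq_bigr do rewrite mulrA mulr_sumr.
rewrite exchange_big; apply: eq_bigr => i _; apply: eq_bigr => j _.
by rewrite (mulrC n%:R^-1) ksym.
Qed.

Lemma inf_le_sup_disc_potential n (w : 'I_n -> Y) m (v : 'I_m -> Y) :
  (0 < n)%N -> (0 < m)%N ->
  inf (range (disc_potential k w)) <= sup (range (disc_potential k v)).
Proof.
move=> n0 m0; have [lw _] := range_bounded (disc_potential_bounds w ^~ n0).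
have [_ uv] := range_bounded (disc_potential_bounds v ^~ m0).
apply: le_trans (_ : _ <= m%:R^-1 * \sum_(j < m) disc_potential k w (v j)) _.
  by apply: mean_ge => // j; apply: (ge_inf lw); exact: imageT.
rewrite disc_potential_mutual; apply: mean_le => // i.
by apply: (ub_le_sup uv); exact: imageT.
Qed.

Lemma rendezvous_set_nonempty : rendezvous_set k !=set0.
Proof.
pose E := [set t : R | exists n (w : 'I_n -> Y),
  (0 < n)%N /\ t = inf (range (disc_potential k w))].
pose v0 := fun _ : 'I_1 => point : Y.
have E0 : E !=set0 by exists (inf (range (disc_potential k v0))), 1%N, v0.
have Eub : ubound E (sup (range (disc_potential k v0))).
  by move=> _ [n [w [n0 ->]]]; exact: inf_le_sup_disc_potential.
exists (sup E) => n w n0; apply/andP; split.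
  by apply: ub_le_sup; [exists (sup (range (disc_potential k v0)))|exists n, w].
by apply: ge_sup => // _ [m [v [m0 ->]]]; exact: inf_le_sup_disc_potential.
Qed.

Lemma average_sub_rendezvous : average_set d k `<=` rendezvous_set k.
Proof.
move=> r Ar n w n0; have := Ar _ (udisc_regular w n0 hd); rewrite /Ameas.
congr (hull _ r); apply/funext => x.
exact (udisc_potential w n0 (k0 x) (dcontinuous_measurable (kernel_dcontinuous x))).
Qed.

Lemma rendezvous_sub_average : rendezvous_set k `<=` average_set d k.
Proof.
move=> r Rr mu reg; have [lU uU] := range_bounded (potential_bounds mu).
apply: hull_uniform_limit lU uU _ => e e0.
have [n [w [n0 approx]]] := potential_uniform_approx reg e0.
by exists (disc_potential k w); [exact: Rr|exact: approx].
Qed.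

End Kernel.

Theorem theorem3p2 (R : realType) (Y : pointedType) (d : Y -> Y -> R)
  (k : Y -> Y -> R) :
  is_metric d ->
  (forall x y, 0 <= k x y) ->
  (forall x y, k x y = k y x) ->
  (exists M : R, forall x y, k x y <= M) ->
  (forall e : R, 0 < e -> exists2 delta : R, 0 < delta &
     forall x x' y, d x x' < delta -> `|k x y - k x' y| < e) ->
  average_set d k = rendezvous_set k /\ average_set d k !=set0.
Proof.
move=> hd k0 ksym [M kM] keq.
have AR := average_sub_rendezvous hd k0 ksym keq.
have RA := rendezvous_sub_average hd k0 ksym kM keq.
split; first by apply/seteqP; split.
have [r Rr] := rendezvous_set_nonempty k0 ksym kM.
by exists r; exact: RA.
Qed.
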